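(* Let $\lambda\in\mathbb{C}$, let $C$ be a path, and let $f$ be a function such that all Jackson integrals below converge and all boundary values below exist. Write $K_\lambda(t,x)=\dfrac{(q^{1-\lambda}t/x)_\infty}{(qt/x)_\infty}$. Then $$E_{\lambda;C}[T f](x)=q^{-\lambda-1}\,T_x E_{\lambda;C}[f](x)-x^\lambda\,\frac{1-q}{q}\left[t\,\frac{1-q^{-\lambda}t/x}{1-t/x}\,f(t)\,K_\lambda(t,x)\right]_{t\in\partial C},$$ $$E_{\lambda;C}[D f](x)=q^{-\lambda}\,D_x E_{\lambda;C}[f](x)+x^\lambda\left[\frac{1-q^{-\lambda}t/x}{1-t/x}\,f(t)\,K_\lambda(t,x)\right]_{t\in\partial C},$$ where $Tf$ denotes the function $t\mapsto f(qt)$ and $Df$ denotes the function $t\mapsto \frac{f(t)-f(qt)}{(1-q)t}$.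
   Context: Fix $q\in\mathbb{C}$ with $0<|q|<1$. For a function $f$ of $x$: $T_xf(x)=f(qx)$, $D_xf(x)=\frac{f(x)-f(qx)}{(1-q)x}$. $(a)_\infty=\prod_{k\ge0}(1-aq^k)$. $x^\lambda$ denotes a fixed branch with $T_x x^\lambda=q^\lambda x^\lambda$. Jackson integrals: $\int_0^\tau f(t)d_qt=(1-q)\sum_{n\ge0}f(\tau q^n)\tau q^n$ for $\tau\in\mathbb{C}$; $\int_0^{\tau\infty}f(t)d_qt=(1-q)\sum_{n\in\mathbb{Z}}f(\tau q^n)\tau q^n$; for $\tau_1,\tau_2\in\mathbb{C}\cup\mathbb{C}\infty$, $\int_{[\tau_1,\tau_2]}=\int_{[0,\tau_2]}-\int_{[0,\tau_1]}$. A path is a formal linear combination $C=\sum a_iC_i$ of such intervals, with $\int_C=\sum a_i\int_{C_i}$. Boundary values: $[F(t)]_{t\in\partial[\tau_1,\tau_2]}=F(\tau_2)-F(\tau_1)$, extended linearly to paths, where $F(\tau\infty)=\lim_{n\to-\infty}F(\tau q^n)$ and $F(0)$ means $\lim_{n\to+\infty}F(\tau q^n)$. The $q$-Euler type integral transformation is $E_{\lambda;C}[f](x)=x^\lambda\int_C f(t)\,\frac{(q^{1-\lambda}t/x)_\infty}{(qt/x)_\infty}\,d_qt$. *)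

From Stdlib Require Import Reals ZArith List ClassicalEpsilon.
From Coquelicot Require Import Coquelicot.
Import ListNotations.
Open Scope C_scope.

Fixpoint cpow (z : C) (n : nat) : C :=
  match n with O => RtoC 1 | S m => z * cpow z m end.

Definition cpowZ (z : C) (n : Z) : C :=
  match n with
  | Z0 => RtoC 1
  | Zpos p => cpow z (Pos.to_nat p)
  | Zneg p => cpow (/ z) (Pos.to_nat p)
  end.

Definition cconv (u : nat -> C) (l : C) : Prop :=
  filterlim u eventually (locally l).
Definition has_limC (u : nat -> C) : Prop := exists l, cconv u l.
Definition limC (u : nat -> C) : C := epsilon (inhabits (RtoC 0)) (fun l => cconv u l).

(** Partial sums / products: psum a n = a 0 + ... + a (n-1). *)
Fixpoint psum (a : nat -> C) (n : nat) : C :=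
  match n with O => RtoC 0 | S m => psum a m + a m end.
Fixpoint pprod (a : nat -> C) (n : nat) : C :=
  match n with O => RtoC 1 | S m => pprod a m * a m end.

Definition series_conv (a : nat -> C) : Prop := has_limC (psum a).
Definition seriesC (a : nat -> C) : C := limC (psum a).

Definition qpoch (q a : C) : C :=
  limC (pprod (fun k => RtoC 1 - a * cpow q k)).

Definition qT (q : C) (f : C -> C) : C -> C := fun t => f (q * t).
Definition qD (q : C) (f : C -> C) : C -> C :=
  fun t => (f t - f (q * t)) / ((RtoC 1 - q) * t).

(** Jackson integrals.  An endpoint is either a finite tau, or tau*oo. *)
Inductive endpt : Type :=
  | Fin (tau : C)
  | Infty (tau : C).

Definition jterm (q : C) (f : C -> C) (tau : C) (n : Z) : C :=
  f (tau * cpowZ q n) * (tau * cpowZ q n).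

Definition jack0_conv q f tau : Prop :=
  series_conv (fun n => jterm q f tau (Z.of_nat n)).
Definition jack0 q f tau : C :=
  (RtoC 1 - q) * seriesC (fun n => jterm q f tau (Z.of_nat n)).

(* int_0^{tau oo} f d_qt = (1-q) sum_{n in Z} f(tau q^n) tau q^n,
   the bilateral sum converging meaning both halves converge *)
Definition jackInf_conv q f tau : Prop :=
  series_conv (fun n => jterm q f tau (Z.of_nat n)) /\
  series_conv (fun n => jterm q f tau (- Z.of_nat (S n))).
Definition jackInf q f tau : C :=
  (RtoC 1 - q) * (seriesC (fun n => jterm q f tau (Z.of_nat n))
                  + seriesC (fun n => jterm q f tau (- Z.of_nat (S n)))).

Definition jack_ep q f (e : endpt) : C :=
  match e with Fin tau => jack0 q f tau | Infty tau => jackInf q f tau end.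
Definition jack_ep_conv q f (e : endpt) : Prop :=
  match e with Fin tau => jack0_conv q f tau | Infty tau => jackInf_conv q f tau end.

(** A path: formal linear combination sum a_i [tau1_i, tau2_i]. *)
Definition path : Type := list (C * (endpt * endpt)).

(* int_{[t1,t2]} = int_{[0,t2]} - int_{[0,t1]}, extended linearly *)
Definition jint q f (P : path) : C :=
  List.fold_right (fun c acc =>
    fst c * (jack_ep q f (snd (snd c)) - jack_ep q f (fst (snd c))) + acc)
    (RtoC 0) P.
Definition jint_conv q f (P : path) : Prop :=
  List.Forall (fun c => jack_ep_conv q f (fst (snd c)) /\ jack_ep_conv q f (snd (snd c))) P.

(** F(0) := lim_{n->+oo} F(tau q^n) on the lattice of the
    endpoint tau; F(tau oo) := lim_{n->-oo} F(tau q^n).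
    [F]_{d[0,tau]} = F(tau) - F(0),  [F]_{d[0,tau oo]} = F(tau oo) - F(0),
    [F]_{d[t1,t2]} = [F]_{d[0,t2]} - [F]_{d[0,t1]}, extended linearly. *)
Definition at0_seq q (F : C -> C) tau : nat -> C := fun n => F (tau * cpow q n).
Definition atInf_seq q (F : C -> C) tau : nat -> C := fun n => F (tau * cpowZ q (- Z.of_nat n)).

Definition bd_ep q F (e : endpt) : C :=
  match e with
  | Fin tau => F tau - limC (at0_seq q F tau)
  | Infty tau => limC (atInf_seq q F tau) - limC (at0_seq q F tau)
  end.
Definition bd_ep_ex q F (e : endpt) : Prop :=
  match e with
  | Fin tau => has_limC (at0_seq q F tau)
  | Infty tau => has_limC (atInf_seq q F tau) /\ has_limC (at0_seq q F tau)
  end.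

Definition bdry q F (P : path) : C :=
  List.fold_right (fun c acc =>
    fst c * (bd_ep q F (snd (snd c)) - bd_ep q F (fst (snd c))) + acc)
    (RtoC 0) P.
Definition bdry_ex q F (P : path) : Prop :=
  List.Forall (fun c => bd_ep_ex q F (fst (snd c)) /\ bd_ep_ex q F (snd (snd c))) P.

(** The point x is not on the q-lattice of any endpoint of the path
    (so that no factor of the kernels / denominators below vanishes). *)
Definition ep_avoids q (e : endpt) (x : C) : Prop :=
  match e with
  | Fin tau => forall n : nat, tau * cpow q n <> x
  | Infty tau => forall n : Z, tau * cpowZ q n <> x
  end.
Definition path_avoids q (P : path) (x : C) : Prop :=
  List.Forall (fun c => ep_avoids q (fst (snd c)) x /\ ep_avoids q (snd (snd c)) x) P.

(** Kernel K_lambda(t,x) = (q^{1-lambda} t/x)_oo / (q t/x)_oo, where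
    ql stands for q^lambda (so q^{1-lambda} = q / ql). *)
Definition Kern (q ql t x : C) : C :=
  qpoch q (q / ql * t / x) / qpoch q (q * t / x).

(** q-Euler transform E_{lambda;C}[f](x) = x^lambda int_C f(t) K(t,x) d_qt,
    xl being the chosen branch of x^lambda. *)
Definition Eul (q ql : C) (xl : C -> C) (P : path) (f : C -> C) (x : C) : C :=
  xl x * jint q (fun t => f t * Kern q ql t x) P.

Definition ratio (q ql t x : C) : C :=
  (RtoC 1 - / ql * t / x) / (RtoC 1 - t / x).

(* Two facts about the kernel drive both formulas.  It depends on [t] and [x]
   only through [t/x], so [K(qt,qx) = K(t,x)]; and the functional equation
   [(a)_oo = (1-a) (qa)_oo] gives [K(t,qx) = (1-q^{-lambda}t/x)/(1-t/x) K(t,x)].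
   With them, each summand of the Jackson integral of [Tf K] or [Df K] at a
   lattice point [p] splits into summands of the integrals defining the
   right-hand side plus a difference [Phi(p) - Phi(qp)]; summed along each
   half-lattice [tau q^n] this difference telescopes to the boundary value of
   [Phi], the limits at [0] and [tau oo] accounting for the open ends. *)

From Stdlib Require Import Reals ZArith List Lra Lia ClassicalEpsilon.
From Coquelicot Require Import Coquelicot.
Open Scope C_scope.

Lemma cconv_unique (u : nat -> C) (l m : C) : cconv u l -> cconv u m -> l = m.
Proof. exact (filterlim_locally_unique (F := eventually) u l m). Qed.

Lemma limC_eq (u : nat -> C) (l : C) : cconv u l -> limC u = l.
Proof.
  intros Hl. apply (cconv_unique u); [|exact Hl].
  apply (epsilon_spec (inhabits (RtoC 0)) (fun l => cconv u l)). now exists l.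
Qed.

Lemma seriesC_eq (a : nat -> C) (l : C) : cconv (psum a) l -> seriesC a = l.
Proof. apply limC_eq. Qed.

Lemma cconv_const (c : C) : cconv (fun _ => c) c.
Proof. apply filterlim_const. Qed.

Lemma cconv_plus (u v : nat -> C) (l m : C) :
  cconv u l -> cconv v m -> cconv (fun n => u n + v n) (l + m).
Proof.
  intros Hu Hv.
  apply (filterlim_comp_2 (F := eventually) u v (fun a b => @plus C_NormedModule a b) Hu Hv).
  apply (@filterlim_plus C_AbsRing C_NormedModule).
Qed.

Lemma cconv_scal (c : C) (u : nat -> C) (l : C) : cconv u l -> cconv (fun n => c * u n) (c * l).
Proof.
  intros Hu.
  apply (filterlim_comp _ _ _ u (fun z => @scal C_AbsRing C_NormedModule c z) _ _ _ Hu).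
  apply (@filterlim_scal_r C_AbsRing C_NormedModule).
Qed.

Lemma cconv_ext (u v : nat -> C) (l : C) : (forall n, u n = v n) -> cconv u l -> cconv v l.
Proof. intros E. apply (filterlim_ext u v); auto. Qed.

Lemma cconv_shift (u : nat -> C) (l : C) : cconv (fun n => u (S n)) l -> cconv u l.
Proof.
  intros Hu P HP. destruct (Hu P HP) as [N HN].
  exists (S N). intros [|n] Hn; [lia|]. apply HN. lia.
Qed.

Lemma psum_sum_n (a : nat -> C) (n : nat) : psum a (S n) = sum_n a n.
Proof.
  induction n as [|n IH].
  - rewrite sum_O. apply Cplus_0_l.
  - rewrite sum_Sn. change (psum a (S n) + a (S n) = Cplus (sum_n a n) (a (S n))).
    now rewrite IH.
Qed.

Lemma psum_conv_le (a : nat -> C) (b : nat -> R) :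
  (forall n, (Cmod (a n) <= b n)%R) -> ex_series b -> has_limC (psum a).
Proof.
  intros Hab Hb.
  destruct (@ex_series_le C_AbsRing C_CompleteNormedModule a b Hab Hb) as [l Hl].
  exists l. apply cconv_shift. apply (cconv_ext (sum_n a)); [|exact Hl].
  intros n. symmetry. apply psum_sum_n.
Qed.

Lemma psum_telescope (a b phi c : nat -> C) (al be ga : C) :
  (forall n, c n = al * a n + be * b n + ga * (phi n - phi (S n))) ->
  forall N, psum c N = al * psum a N + be * psum b N + ga * (phi O - phi N).
Proof. intros Hc N. induction N as [|N IH]; simpl; [ring|]. rewrite IH, Hc. ring. Qed.

Lemma cconv_psum_telescope (a b phi c : nat -> C) (al be ga sa sb l : C) :
  cconv (psum a) sa -> cconv (psum b) sb -> cconv phi l ->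
  (forall n, c n = al * a n + be * b n + ga * (phi n - phi (S n))) ->
  cconv (psum c) (al * sa + be * sb + ga * (phi O - l)).
Proof.
  intros Ha Hb Hphi Hc.
  apply (cconv_ext (fun N => al * psum a N + be * psum b N + (ga * phi O + - ga * phi N))).
  { intros N. rewrite (psum_telescope a b phi c al be ga Hc). ring. }
  replace (ga * (phi O - l)) with (ga * phi O + - ga * l) by ring.
  apply cconv_plus; [apply cconv_plus|apply cconv_plus]; try apply cconv_scal; auto.
  apply cconv_const.
Qed.

Lemma Cmod_cpow (q : C) (n : nat) : Cmod (cpow q n) = (Cmod q ^ n)%R.
Proof. induction n as [|n IH]; simpl; [apply Cmod_1|]. now rewrite Cmod_mult, IH. Qed.

Lemma cpowZ_nat (q : C) (n : nat) : cpowZ q (Z.of_nat n) = cpow q n.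
Proof. destruct n; simpl; auto. now rewrite SuccNat2Pos.id_succ. Qed.

Lemma cpowZ_opp_nat (q : C) (n : nat) : cpowZ q (- Z.of_nat n) = cpow (/ q) n.
Proof. destruct n; simpl; auto. now rewrite SuccNat2Pos.id_succ. Qed.

Lemma Cinv_0 : / RtoC 0 = 0.
Proof. apply injective_projections; simpl; unfold Rdiv; ring. Qed.

Lemma Cmod_gt0_neq0 (z : C) : (0 < Cmod z)%R -> z <> 0.
Proof. intros Hz E. rewrite E, Cmod_0 in Hz. lra. Qed.

Lemma Csub_neq0 (a b : C) : b <> a -> a - b <> 0.
Proof. intros Hab E. apply Hab. rewrite <- (Cplus_0_l b), <- E. ring. Qed.

Lemma Cmod_lt1_sub_neq0 (q : C) : (Cmod q < 1)%R -> 1 - q <> 0.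
Proof.
  intros Hq. apply Csub_neq0. intros ->. rewrite Cmod_1 in Hq. lra.
Qed.

Lemma exp_le_mono (a b : R) : (a <= b)%R -> (exp a <= exp b)%R.
Proof.
  intros [Hab| ->]; [left; now apply exp_increasing|lra].
Qed.

Lemma qpoch_pprod_bound (q a : C) : (Cmod q < 1)%R -> forall n,
  (Cmod (pprod (fun k => (1 - a * cpow q k)%C) n)
     <= exp (Cmod a * (1 - Cmod q ^ n) / (1 - Cmod q)))%R.
Proof.
  intros Hq. pose proof (Cmod_ge_0 q). pose proof (Cmod_ge_0 a).
  induction n as [|n IH]; simpl.
  - rewrite Cmod_1. replace (Cmod a * (1 - 1) / (1 - Cmod q))%R with 0%R by (field; lra).
    rewrite exp_0. lra.
  - assert (Hpow : (0 <= Cmod q ^ n)%R) by now apply pow_le.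
    assert (Hfactor : (Cmod (1 - a * cpow q n) <= 1 + Cmod a * Cmod q ^ n)%R).
    { eapply Rle_trans; [apply Cmod_triangle|].
      rewrite Cmod_opp, Cmod_mult, Cmod_cpow, Cmod_1. lra. }
    rewrite Cmod_mult.
    eapply Rle_trans; [apply Rmult_le_compat; try apply Cmod_ge_0; eassumption|].
    eapply Rle_trans; [apply Rmult_le_compat_l; [left; apply exp_pos|apply exp_ineq1_le]|].
    rewrite <- exp_plus. apply exp_le_mono. right. field. lra.
Qed.

(* The increments [P (n+1) - P n = - a q^n P n] are dominated by a geometric series. *)
Lemma qpoch_pprod_conv (q a : C) : (Cmod q < 1)%R ->
  has_limC (pprod (fun k => 1 - a * cpow q k)).
Proof.
  intros Hq. set (P := pprod (fun k => 1 - a * cpow q k)).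
  set (M := exp (Cmod a / (1 - Cmod q))).
  pose proof (Cmod_ge_0 q). pose proof (Cmod_ge_0 a).
  assert (HM : forall n, (Cmod (P n) <= M)%R).
  { intros n. eapply Rle_trans; [apply qpoch_pprod_bound; auto|]. apply exp_le_mono.
    unfold Rdiv. apply Rmult_le_compat_r; [left; apply Rinv_0_lt_compat; lra|].
    assert (0 <= Cmod q ^ n)%R by now apply pow_le. nra. }
  set (d := fun n => P (S n) - P n).
  assert (Hd : has_limC (psum d)).
  { apply (psum_conv_le d (fun n => M * Cmod a * Cmod q ^ n)%R).
    - intros n. unfold d, P at 1. simpl. fold P.
      replace (P n * (1 - a * cpow q n) - P n) with (P n * - (a * cpow q n)) by ring.
      rewrite Cmod_mult, Cmod_opp, Cmod_mult, Cmod_cpow, <- Rmult_assoc.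
      assert (0 <= Cmod q ^ n)%R by now apply pow_le.
      apply Rmult_le_compat_r; auto. apply Rmult_le_compat_r; auto.
    - apply (@ex_series_scal R_AbsRing R_NormedModule (M * Cmod a)%R).
      apply ex_series_geom. now rewrite Rabs_pos_eq. }
  destruct Hd as [l Hl]. exists (l + 1).
  apply (cconv_ext (fun n => psum d n + 1)); [|apply cconv_plus; auto; apply cconv_const].
  intros n. induction n as [|n IH]; [unfold P; simpl; ring|].
  change (psum d n + (P (S n) - P n) + 1 = P (S n)). rewrite <- IH. ring.
Qed.

Lemma qpoch_step (q b : C) : (Cmod q < 1)%R -> qpoch q b = (1 - b) * qpoch q (q * b).
Proof.
  intros Hq. destruct (qpoch_pprod_conv q (q * b) Hq) as [L HL].
  unfold qpoch. rewrite (limC_eq _ L HL). apply limC_eq, cconv_shift.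
  apply (cconv_ext (fun n => (1 - b) * pprod (fun k => 1 - q * b * cpow q k) n));
    [|now apply cconv_scal].
  intros n. induction n as [|n IH]; simpl in *; [ring|]. rewrite <- IH. ring.
Qed.

Lemma Kern_scale (q ql c t x : C) : c <> 0 -> x <> 0 ->
  Kern q ql (c * t) (c * x) = Kern q ql t x.
Proof.
  intros Hc Hx. unfold Kern. set (a := q / ql).
  replace (a * (c * t) / (c * x)) with (a * t / x) by (field; auto).
  replace (q * (c * t) / (c * x)) with (q * t / x) by (field; auto). reflexivity.
Qed.

Lemma Kern_mulq_x (q ql t x : C) : (0 < Cmod q < 1)%R -> ql <> 0 -> x <> 0 -> t <> x ->
  Kern q ql t (q * x) = ratio q ql t x * Kern q ql t x.
Proof.
  intros [Hq0 Hq1] Hql Hx Htx. pose proof (Cmod_gt0_neq0 q Hq0) as Hq.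
  unfold Kern, ratio.
  rewrite (qpoch_step q (q / ql * t / (q * x))), (qpoch_step q (q * t / (q * x))) by auto.
  replace (q * (q / ql * t / (q * x))) with (q / ql * t / x) by (field; auto).
  replace (q * (q * t / (q * x))) with (q * t / x) by (field; auto).
  replace (q / ql * t / (q * x)) with (/ ql * t / x) by (field; auto).
  replace (q * t / (q * x)) with (t / x) by (field; auto).
  set (B := qpoch q (q * t / x)).
  (* [B] may vanish, in which case both sides are [0] by the convention [/0 = 0]. *)
  destruct (Ceq_dec B 0) as [HB|HB].
  - rewrite HB, Cmult_0_r. unfold Cdiv. rewrite !Cinv_0. ring.
  - field. repeat split; auto. now apply Csub_neq0.
Qed.

Section JacksonTelescope.

Variables (q x : C) (L A B Phi : C -> C) (al be ga : C).
Hypothesis q_neq0 : q <> 0.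
Hypothesis L_telescope : forall p, p <> x -> q * p <> x ->
  L p * p = al * (A p * p) + be * (B p * p) + ga * (Phi p - Phi (q * p)).

Lemma seriesC_jterm_nat (tau sa sb l : C) :
  (forall n : nat, tau * cpow q n <> x) ->
  cconv (psum (fun n => jterm q A tau (Z.of_nat n))) sa ->
  cconv (psum (fun n => jterm q B tau (Z.of_nat n))) sb ->
  cconv (at0_seq q Phi tau) l ->
  seriesC (fun n => jterm q L tau (Z.of_nat n)) = al * sa + be * sb + ga * (Phi tau - l).
Proof.
  intros Hav Ha Hb Hl. apply seriesC_eq.
  replace (Phi tau) with (at0_seq q Phi tau O) by (unfold at0_seq; simpl; now rewrite Cmult_1_r).
  apply (cconv_psum_telescope _ _ _ _ al be ga sa sb l Ha Hb Hl).
  intros n. unfold jterm, at0_seq. rewrite !cpowZ_nat.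
  assert (Hshift : tau * cpow q (S n) = q * (tau * cpow q n)) by (simpl; ring).
  rewrite Hshift. apply L_telescope; [|rewrite <- Hshift]; apply Hav.
Qed.

Lemma seriesC_jterm_neg (tau sa sb l : C) :
  (forall n : nat, tau * cpow (/ q) n <> x) ->
  cconv (psum (fun n => jterm q A tau (- Z.of_nat (S n)))) sa ->
  cconv (psum (fun n => jterm q B tau (- Z.of_nat (S n)))) sb ->
  cconv (atInf_seq q Phi tau) l ->
  seriesC (fun n => jterm q L tau (- Z.of_nat (S n))) = al * sa + be * sb + ga * (l - Phi tau).
Proof.
  intros Hav Ha Hb Hl. apply seriesC_eq.
  set (psi := fun n => Phi (tau * cpow (/ q) n)).
  assert (Hpsi : cconv psi l).
  { apply (cconv_ext (atInf_seq q Phi tau)); auto.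
    intros n. unfold atInf_seq, psi. now rewrite cpowZ_opp_nat. }
  replace (ga * (l - Phi tau)) with (- ga * (psi O - l))
    by (unfold psi; simpl; rewrite Cmult_1_r; ring).
  apply (cconv_psum_telescope _ _ _ _ al be (- ga) sa sb l Ha Hb Hpsi).
  intros n. unfold jterm, psi. rewrite !cpowZ_opp_nat.
  assert (Hshift : q * (tau * cpow (/ q) (S n)) = tau * cpow (/ q) n).
  { simpl. replace (q * (tau * (/ q * cpow (/ q) n))) with (q * / q * (tau * cpow (/ q) n)) by ring.
    rewrite Cinv_r; auto. ring. }
  rewrite L_telescope, Hshift; [ring|apply Hav|rewrite Hshift; apply Hav].
Qed.

Lemma jack_ep_telescope (e : endpt) : ep_avoids q e x ->
  jack_ep_conv q A e -> jack_ep_conv q B e -> bd_ep_ex q Phi e ->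
  jack_ep q L e = al * jack_ep q A e + be * jack_ep q B e + ga * (1 - q) * bd_ep q Phi e.
Proof.
  destruct e as [tau|tau]; simpl; intros Hav Ha Hb Hbd.
  - destruct Ha as [sa Ha], Hb as [sb Hb], Hbd as [l Hl]. unfold jack0.
    rewrite (seriesC_jterm_nat tau sa sb l), (seriesC_eq _ _ Ha), (seriesC_eq _ _ Hb),
      (limC_eq _ _ Hl) by auto.
    ring.
  - destruct Ha as [[sa Ha] [sa' Ha']], Hb as [[sb Hb] [sb' Hb']], Hbd as [[l' Hl'] [l Hl]].
    assert (Hav0 : forall n : nat, tau * cpow q n <> x)
      by (intros n; rewrite <- cpowZ_nat; apply Hav).
    assert (Havoo : forall n : nat, tau * cpow (/ q) n <> x)
      by (intros n; rewrite <- cpowZ_opp_nat; apply Hav).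
    unfold jackInf.
    rewrite (seriesC_jterm_nat tau sa sb l), (seriesC_jterm_neg tau sa' sb' l') by auto.
    rewrite (seriesC_eq _ _ Ha), (seriesC_eq _ _ Hb), (limC_eq _ _ Hl),
      (seriesC_eq _ _ Ha'), (seriesC_eq _ _ Hb'), (limC_eq _ _ Hl').
    ring.
Qed.

Lemma jint_telescope (P : path) : path_avoids q P x ->
  jint_conv q A P -> jint_conv q B P -> bdry_ex q Phi P ->
  jint q L P = al * jint q A P + be * jint q B P + ga * (1 - q) * bdry q Phi P.
Proof.
  induction P as [|c P IH]; simpl; intros Hav Ha Hb Hbd; [ring|].
  inversion Hav as [|? ? [Hav1 Hav2] Hav']; subst.
  inversion Ha as [|? ? [Ha1 Ha2] Ha']; subst.
  inversion Hb as [|? ? [Hb1 Hb2] Hb']; subst.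
  inversion Hbd as [|? ? [Hbd1 Hbd2] Hbd']; subst.
  rewrite IH, !jack_ep_telescope by auto. ring.
Qed.

End JacksonTelescope.

Section KernelShift.

Variables (q ql x : C).
Hypotheses (Hq : (0 < Cmod q < 1)%R) (Hql : ql <> 0) (Hx : x <> 0).

Let q_neq0 : q <> 0.
Proof. apply Cmod_gt0_neq0. lra. Qed.

Lemma Kern_mulq_t (t : C) : q * t <> x ->
  Kern q ql t x = ratio q ql (q * t) x * Kern q ql (q * t) x.
Proof.
  intros Hqt. rewrite <- (Kern_scale q ql q t x) by auto. now apply Kern_mulq_x.
Qed.

Lemma qT_Kern_telescope (f : C -> C) (p : C) : p <> x -> q * p <> x ->
  qT q f p * Kern q ql p x * p
  = / q * (f p * Kern q ql p (q * x) * p)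
    + - / q * (p * ratio q ql p x * f p * Kern q ql p x
               - q * p * ratio q ql (q * p) x * f (q * p) * Kern q ql (q * p) x).
Proof.
  intros Hp Hqp. unfold qT.
  rewrite (Kern_mulq_x q ql p x), (Kern_mulq_t p) by auto. field. auto.
Qed.

Lemma qD_Kern_telescope (f : C -> C) (p : C) : p <> x -> q * p <> x ->
  qD q f p * Kern q ql p x * p
  = / ql * / ((1 - q) * x) * (f p * Kern q ql p x * p)
    + - / ((1 - q) * x) * (f p * Kern q ql p (q * x) * p)
    + / (1 - q) * (ratio q ql p x * f p * Kern q ql p x
                   - ratio q ql (q * p) x * f (q * p) * Kern q ql (q * p) x).
Proof.
  intros Hp Hqp. pose proof (Cmod_lt1_sub_neq0 q (proj2 Hq)).
  destruct (Ceq_dec p 0) as [->|Hp0]; [rewrite !Cmult_0_r; ring|].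
  rewrite (Kern_mulq_x q ql p x), (Kern_mulq_t p) by auto.
  unfold qD, ratio. field. repeat split; auto; now apply Csub_neq0.
Qed.

End KernelShift.

Theorem mainTheorem1 (q ql : C) (xl : C -> C) (P : path) (f : C -> C) (x : C) :
  0 < Cmod q < 1 ->
  ql <> RtoC 0 ->
  (forall y : C, xl (q * y) = ql * xl y) ->
  x <> RtoC 0 ->
  path_avoids q P x ->
  jint_conv q (fun t => f t * Kern q ql t x) P ->
  jint_conv q (fun t => f t * Kern q ql t (q * x)) P ->
  jint_conv q (fun t => qT q f t * Kern q ql t x) P ->
  jint_conv q (fun t => qD q f t * Kern q ql t x) P ->
  bdry_ex q (fun t => t * ratio q ql t x * f t * Kern q ql t x) P ->
  bdry_ex q (fun t => ratio q ql t x * f t * Kern q ql t x) P ->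
  Eul q ql xl P (qT q f) x
    = / (ql * q) * Eul q ql xl P f (q * x)
      - xl x * ((RtoC 1 - q) / q)
          * bdry q (fun t => t * ratio q ql t x * f t * Kern q ql t x) P
  /\
  Eul q ql xl P (qD q f) x
    = / ql * ((Eul q ql xl P f x - Eul q ql xl P f (q * x)) / ((RtoC 1 - q) * x))
      + xl x * bdry q (fun t => ratio q ql t x * f t * Kern q ql t x) P.
Proof.
  intros Hq Hql Hxl Hx Hav Hf Hfq HTf HDf HbdT HbdD.
  assert (Hq0 : q <> 0) by (apply Cmod_gt0_neq0; lra).
  pose proof (Cmod_lt1_sub_neq0 q (proj2 Hq)).
  unfold Eul. rewrite Hxl. split.
  - rewrite (jint_telescope q x (fun t => qT q f t * Kern q ql t x)
      (fun t => f t * Kern q ql t (q * x)) (fun t => f t * Kern q ql t (q * x))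
      (fun t => t * ratio q ql t x * f t * Kern q ql t x) (/ q) 0 (- / q)); auto.
    + field. auto.
    + intros p Hp Hqp. rewrite qT_Kern_telescope by auto. ring.
  - rewrite (jint_telescope q x (fun t => qD q f t * Kern q ql t x)
      (fun t => f t * Kern q ql t x) (fun t => f t * Kern q ql t (q * x))
      (fun t => ratio q ql t x * f t * Kern q ql t x)
      (/ ql * / ((1 - q) * x)) (- / ((1 - q) * x)) (/ (1 - q))); auto.
    + field. auto.
    + intros p Hp Hqp. now apply qD_Kern_telescope.
Qed.
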